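(* Assume $m\le n$. Then $\mathcal{T}_I(\mathbf{x})\ne\emptyset$ for every Generalized Nash equilibrium $\mathbf{x}$ of $G^{(2)}$.
   Context: $G^{(2)}$ is a Fragile multi-CPR Game with $n\ge1$ players and $m\ge1$ CPRs: $[k]=\{1,\dots,k\}$, $C_m=\{(x_1,\dots,x_m)\in[0,1]^m:\sum_j x_j\le1\}$, $\mathcal{C}_n=\prod_{i\in[n]}C_m$, $\mathcal{C}_{-i}=\prod_{[n]\setminus\{i\}}C_m$. A profile is $\mathbf{x}=(\mathbf{x}_1,\dots,\mathbf{x}_n)$, $\mathbf{x}_i=(x_{i1},\dots,x_{im})$; write $\mathbf{x}=(\mathbf{x}_i,\mathbf{x}_{-i})$; $\mathbf{x}_T^{(j)}=\sum_i x_{ij}$, $\mathbf{x}_T^{j|i}=\sum_{\ell\ne i}x_{\ell j}$. Each CPR $j$ has return rate $\mathcal{R}_j(t)>1$ and failure probability $p_j(t)\in[0,1]$; each player $i$ has parameters $a_i,k_i$. $\mathcal{F}_{ij}(t)=(\mathcal{R}_j(t)-1)^{a_i}(1-p_j(t))-k_ip_j(t)$; utility $\mathcal{V}_i(\mathbf{x}_i;\mathbf{x}_{-i})=\sum_j x_{ij}^{a_i}\mathcal{F}_{ij}(\mathbf{x}_T^{(j)})$. Assumption: (1) $p_j(0)=0$, $p_j(t)=1$ for $t\ge1$; (2) $a_i\in(0,1]$, $k_i>0$; (3) each $\mathcal{F}_{ij}$ (continuous on $[0,1]$) has strictly negative first and second derivatives on $(0,1)$. $\omega_{ij}\in(0,1)$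 is the unique zero of $\mathcal{F}_{ij}$ in $(0,1)$. $A(\mathbf{x}_{-i})=\{j:\mathbf{x}_T^{j|i}<\omega_{ij}\}$. $\vartheta_i(\mathbf{x}_{-i})=C_m\cap\big(\prod_{j\in A(\mathbf{x}_{-i})}[0,\omega_{ij}-\mathbf{x}_T^{j|i}]\times\prod_{j\notin A(\mathbf{x}_{-i})}\{0\}\big)$. A Generalized Nash equilibrium is $\mathbf{x}\in\mathcal{C}_n$ with, for all $i$, $\mathbf{x}_i\in\vartheta_i(\mathbf{x}_{-i})$ and $\mathcal{V}_i(\mathbf{x}_i;\mathbf{x}_{-i})\ge\mathcal{V}_i(\mathbf{z};\mathbf{x}_{-i})$ for all $\mathbf{z}\in\vartheta_i(\mathbf{x}_{-i})$. $\psi_{ij}(x;s)=x\,\mathcal{F}_{ij}'(x+s)+a_i\mathcal{F}_{ij}(x+s)$. For a GNE $\mathbf{x}$: $J_{\mathbf{x}_{-i}}=\{j\in A(\mathbf{x}_{-i}):x_{ij}\ne0\}$; $\mathbf{x}_i$ is of Type I if $\sum_{j\in J_{\mathbf{x}_{-i}}}x_{ij}<1$ and $\psi_{ij}(x_{ij};\mathbf{x}_T^{j|i})=0$ for all $j\in J_{\mathbf{x}_{-i}}$; of Type II if $\sum_{j\in J_{\mathbf{x}_{-i}}}x_{ij}=1$ and there is $\kappa_0\ge0$ with $x_{ij}^{a_i-1}\psi_{ij}(x_{ij};\mathbf{x}_T^{j|i})=\kappa_0$ for all $j\in J_{\mathbf{x}_{-i}}$. $\mathcal{T}_I(\mathbf{x})=\{i\in[n]:\mathbf{x}_i\text{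 is of Type I}\}$. *)

From HB Require Import structures.
From mathcomp Require Import all_boot all_order all_algebra.
From mathcomp Require Import all_classical all_reals all_analysis.
Set Implicit Arguments. Unset Strict Implicit. Unset Printing Implicit Defensive.
Import Order.TTheory GRing.Theory Num.Theory numFieldNormedType.Exports.
Local Open Scope ring_scope.

(* Players are 'I_n, CPRs are 'I_m; a profile is x : 'I_n -> 'I_m -> R,
   x i j = x_{ij}. *)

Definition xTo (R : realType) (n m : nat) (x : 'I_n -> 'I_m -> R) (i : 'I_n) (j : 'I_m) : R :=
  \sum_(l < n | l != i) x l j.

Definition Fpay (R : realType) (n m : nat) (Rr p : 'I_m -> R -> R) (a k : 'I_n -> R)
  (i : 'I_n) (j : 'I_m) (t : R) : R :=
  (Rr j t - 1) `^ (a i) * (1 - p j t) - k i * p j t.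

Definition inCm (R : realType) (m : nat) (z : 'I_m -> R) : Prop :=
  (forall j, 0 <= z j <= 1) /\ \sum_(j < m) z j <= 1.

Definition inA (R : realType) (n m : nat) (omega : 'I_n -> 'I_m -> R)
  (x : 'I_n -> 'I_m -> R) (i : 'I_n) (j : 'I_m) : bool :=
  xTo x i j < omega i j.

Definition vartheta (R : realType) (n m : nat) (omega : 'I_n -> 'I_m -> R)
  (x : 'I_n -> 'I_m -> R) (i : 'I_n) (z : 'I_m -> R) : Prop :=
  inCm z /\
  forall j, if inA omega x i j then 0 <= z j <= omega i j - xTo x i j else z j == 0.

Definition Vutil (R : realType) (n m : nat) (F : 'I_n -> 'I_m -> R -> R) (a : 'I_n -> R)
  (x : 'I_n -> 'I_m -> R) (i : 'I_n) (z : 'I_m -> R) : R :=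
  \sum_(j < m) (z j `^ a i) * F i j (z j + xTo x i j).

Definition isGNE (R : realType) (n m : nat) (F : 'I_n -> 'I_m -> R -> R) (a : 'I_n -> R)
  (omega : 'I_n -> 'I_m -> R) (x : 'I_n -> 'I_m -> R) : Prop :=
  (forall i, inCm (x i)) /\
  forall i, vartheta omega x i (x i) /\
    forall z, vartheta omega x i z -> Vutil F a x i z <= Vutil F a x i (x i).

Definition psi (R : realType) (n m : nat) (F : 'I_n -> 'I_m -> R -> R) (a : 'I_n -> R)
  (i : 'I_n) (j : 'I_m) (y s : R) : R :=
  y * derive1 (F i j) (y + s) + a i * F i j (y + s).

Definition inJ (R : realType) (n m : nat) (omega : 'I_n -> 'I_m -> R)
  (x : 'I_n -> 'I_m -> R) (i : 'I_n) (j : 'I_m) : bool :=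
  inA omega x i j && (x i j != 0).

Definition typeI (R : realType) (n m : nat) (F : 'I_n -> 'I_m -> R -> R) (a : 'I_n -> R)
  (omega : 'I_n -> 'I_m -> R) (x : 'I_n -> 'I_m -> R) (i : 'I_n) : Prop :=
  \sum_(j < m | inJ omega x i j) x i j < 1 /\
  forall j, inJ omega x i j -> psi F a i j (x i j) (xTo x i j) = 0.

Definition typeII (R : realType) (n m : nat) (F : 'I_n -> 'I_m -> R -> R) (a : 'I_n -> R)
  (omega : 'I_n -> 'I_m -> R) (x : 'I_n -> 'I_m -> R) (i : 'I_n) : Prop :=
  \sum_(j < m | inJ omega x i j) x i j = 1 /\
  exists kappa0 : R, 0 <= kappa0 /\
    forall j, inJ omega x i j ->
      (x i j) `^ (a i - 1) * psi F a i j (x i j) (xTo x i j) = kappa0.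

From HB Require Import structures.
From mathcomp Require Import all_boot all_order all_algebra.
From mathcomp Require Import all_classical all_reals all_analysis.
From mathcomp Require Import ring lra.
Set Implicit Arguments. Unset Strict Implicit. Unset Printing Implicit Defensive.
Import Order.TTheory GRing.Theory Num.Theory numFieldNormedType.Exports.
Local Open Scope ring_scope.
Local Open Scope classical_set_scope.

(* At an equilibrium a CPR j is used only by players who keep its total load
   below omega_ij < 1, so every column sum of x is below 1; as m <= n, some
   player i invests less than 1 in total.  Her budget constraint is then
   slack, so at each CPR j she uses she may move x_ij alone in both
   directions.  The deviation payoff u^(a_i) F_ij(u + x_T^{j|i}) has
   derivative x_ij^(a_i - 1) psi_ij at u = x_ij, so lowering x_ij gives
   psi_ij >= 0 and raising it gives psi_ij <= 0.  Raising is impossible only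
   at the cap x_ij + x_T^{j|i} = omega_ij, but there F_ij vanishes and
   psi_ij = x_ij F'_ij(omega_ij) < 0 anyway.  Hence psi_ij = 0 and x_i is of
   Type I. *)

Lemma is_derive_right_max_le0 (R : realType) (f : R -> R) (c d e : R) :
  is_derive c 1 f d -> 0 < e ->
  (forall h, 0 < h < e -> f (c + h) <= f c) -> d <= 0.
Proof.
move=> [fdrvbl <-] e_gt0 cmax.
rewrite ['D_1 f c]cvg_at_rightE; last exact: fdrvbl.
apply: limr_le.
  rewrite -(cvg_at_rightE (fun h : R => h^-1 *: ((f \o shift c) _ - f c))) //.
  apply: cvg_trans fdrvbl; apply: cvg_app.
  move=> A [e' e'_gt0 Ae]; exists e' => // x xe x_gt0; apply: Ae => //.
  exact/lt0r_neq0.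
near=> h; apply: mulr_ge0_le0.
  by rewrite invr_ge0; apply: ltW; near: h; exists 1 => /=.
rewrite subr_le0 [_%:A]mulr1 /= addrC; apply: cmax; apply/andP; split.
  by near: h; exists 1 => /=.
near: h; exists e => //= h + h_gt0.
by rewrite /ball_ /= sub0r normrN gtr0_norm.
Unshelve. all: end_near. Qed.

Lemma is_derive_left_max_ge0 (R : realType) (f : R -> R) (c d e : R) :
  is_derive c 1 f d -> 0 < e ->
  (forall h, 0 < h < e -> f (c - h) <= f c) -> 0 <= d.
Proof.
move=> fd e_gt0 cmax.
have fNd : is_derive (- c) 1 (f \o -%R) (d * -1).
  by apply: is_derive1_comp; rewrite opprK.
rewrite -oppr_le0 -mulrN1.
apply: (is_derive_right_max_le0 fNd e_gt0) => h h_lte.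
by rewrite /= opprK opprD opprK; apply: cmax.
Qed.

Lemma is_derive_powR_mul_shift (R : realType) (G : R -> R) (a s y : R) :
  0 < y -> derivable G (y + s) 1 ->
  is_derive y 1 (fun u => u `^ a * G (u + s))
    (y `^ (a - 1) * (y * derive1 G (y + s) + a * G (y + s))).
Proof.
move=> y_gt0 dG.
have dGs : is_derive y 1 (G \o shift s) (derive1 G (y + s) * 1).
  apply: is_derive1_comp; last exact: is_derive_shift.
  by rewrite derive1E; apply: derivableP.
apply: is_derive_eq (is_deriveM (is_derive1_powR a y_gt0) dGs) _.
have y_pow : y `^ a = y `^ (a - 1) * y.
  by rewrite -{3}(powRr1 (ltW y_gt0)) -powRD ?subrK // (gt_eqF y_gt0) implybT.
by rewrite /GRing.scale /= mulr1 y_pow; ring.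
Qed.

Lemma big_update (V : zmodType) (T : Type) (m : nat) (H : 'I_m -> T -> V)
    (f : 'I_m -> T) (j : 'I_m) (v : T) :
  \sum_(l < m) H l (if l == j then v else f l) =
  \sum_(l < m) H l (f l) + (H j v - H j (f j)).
Proof.
rewrite (bigD1 j) //= eqxx [in RHS](bigD1 j) //=.
rewrite (eq_bigr (fun l => H l (f l))) => [|l /negbTE -> //].
by rewrite addrAC addrCA subrr addr0 addrC.
Qed.

Lemma exists_row_sum_lt1 (R : realDomainType) (n m : nat) (x : 'I_n -> 'I_m -> R) :
  (0 < m)%N -> (m <= n)%N -> (forall j, \sum_(i < n) x i j < 1) ->
  exists i, \sum_(j < m) x i j < 1.
Proof.
move=> m_gt0 le_mn col_lt1.
suff /existsP[i row_lt1] : [exists i, \sum_(j < m) x i j < 1] by exists i.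
apply: contraT; rewrite negb_exists => /forallP row_ge1.
have rows : (n%:R : R) <= \sum_(i < n) \sum_(j < m) x i j.
  rewrite -[n in n%:R]card_ord -sumr_const; apply: ler_sum => i _.
  by rewrite leNgt row_ge1.
have cols : \sum_(j < m) \sum_(i < n) x i j < m%:R.
  rewrite -[m in m%:R]card_ord -sumr_const; apply: ltr_sum => [|j _].
    by apply/hasP; exists (Ordinal m_gt0); rewrite ?mem_index_enum.
  exact: col_lt1.
have : (m%:R : R) <= n%:R by rewrite ler_nat.
rewrite exchange_big /= in rows; lra.
Qed.

Section Equilibrium.
Variables (R : realType) (n m : nat) (F : 'I_n -> 'I_m -> R -> R) (a : 'I_n -> R)
  (omega : 'I_n -> 'I_m -> R) (x : 'I_n -> 'I_m -> R).

Lemma sum_col_xTo i j : \sum_(l < n) x l j = x i j + xTo x i j.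
Proof. by rewrite (bigD1 i). Qed.

Hypothesis gne : isGNE F a omega x.
Hypothesis omega_lt1 : forall i j, omega i j < 1.

Lemma gne_ge0 i j : 0 <= x i j.
Proof. by have /andP[] := (gne.1 i).1 j. Qed.

Lemma gne_xTo_ge0 i j : 0 <= xTo x i j.
Proof. by apply: sumr_ge0 => l _; apply: gne_ge0. Qed.

Lemma gne_load_le_omega i j :
  x i j != 0 -> inA omega x i j /\ x i j + xTo x i j <= omega i j.
Proof.
move=> x_neq0; have := (gne.2 i).1.2 j.
case: ifP => [jA /andP[_ x_le] | _ /eqP x_eq0]; last by rewrite x_eq0 eqxx in x_neq0.
by split; rewrite // -lerBrDr.
Qed.

Lemma gne_col_sum_lt1 j : \sum_(i < n) x i j < 1.
Proof.
case: (boolP [exists i, x i j != 0]) => [/existsP[i x_neq0] | ].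
  rewrite (sum_col_xTo i); have [_ load_le] := gne_load_le_omega x_neq0.
  exact: le_lt_trans load_le (omega_lt1 i j).
rewrite negb_exists => /forallP x_eq0; rewrite big1 ?ltr01 // => i _.
by apply/eqP/negPn; apply: x_eq0.
Qed.

Lemma gne_deviation i j h : inA omega x i j ->
  0 <= x i j + h <= omega i j - xTo x i j -> \sum_(l < m) x i l + h <= 1 ->
  (x i j + h) `^ a i * F i j (x i j + h + xTo x i j) <=
  x i j `^ a i * F i j (x i j + xTo x i j).
Proof.
move=> jA /andP[xh_ge0 xh_le] row_le.
pose z l := if l == j then x i j + h else x i l.
have z_feasible : vartheta omega x i z.
  split; [split|].
  - move=> l; rewrite /z; case: eqP => _; last exact: (gne.1 i).1 l.
    have := omega_lt1 i j; have := gne_xTo_ge0 i j; rewrite xh_ge0 /=; lra.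
  - rewrite (big_update (fun _ w => w)) /=; lra.
  - move=> l; rewrite /z; case: eqP => [->|_]; last exact: (gne.2 i).1.2 l.
    by rewrite jA xh_ge0.
have := (gne.2 i).2 z z_feasible.
rewrite /Vutil (big_update (fun l w => w `^ a i * F i l (w + xTo x i l))) /=; lra.
Qed.

Hypothesis F_deriv : forall i j t, 0 < t < 1 ->
  derivable (F i j) t 1 /\ derive1 (F i j) t < 0.
Hypothesis F_omega : forall i j, F i j (omega i j) = 0.

Lemma gne_inJ_bounds i j :
  inJ omega x i j -> 0 < x i j /\ x i j + xTo x i j <= omega i j.
Proof.
case/andP=> _ x_neq0; have [_ load_le] := gne_load_le_omega x_neq0.
by rewrite lt0r x_neq0 gne_ge0.
Qed.

Lemma is_derive_deviation i j : inJ omega x i j ->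
  is_derive (x i j) 1 (fun u => u `^ a i * F i j (u + xTo x i j))
    (x i j `^ (a i - 1) * psi F a i j (x i j) (xTo x i j)).
Proof.
move=> jJ; have [x_gt0 load_le] := gne_inJ_bounds jJ.
apply: is_derive_powR_mul_shift => //; apply: (F_deriv i j _).1.
by apply/andP; split; have := omega_lt1 i j; have := gne_xTo_ge0 i j; lra.
Qed.

Lemma gne_psi_ge0 i j : inJ omega x i j -> 0 <= psi F a i j (x i j) (xTo x i j).
Proof.
move=> jJ; have [x_gt0 load_le] := gne_inJ_bounds jJ.
rewrite -(pmulr_rge0 _ (powR_gt0 (a i - 1) x_gt0)).
apply: (is_derive_left_max_ge0 (is_derive_deviation jJ) x_gt0) => h /andP[h_gt0 h_lt].
apply: gne_deviation; first by case/andP: jJ.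
  by apply/andP; split; lra.
have := (gne.1 i).2; lra.
Qed.

Lemma psi_lt0_at_omega i j y s :
  0 < y -> 0 <= s -> y + s = omega i j -> psi F a i j y s < 0.
Proof.
move=> y_gt0 s_ge0 load_eq; rewrite /psi load_eq F_omega mulr0 addr0 pmulr_rlt0 //.
by apply: (F_deriv i j _).2; rewrite omega_lt1 andbT -load_eq; lra.
Qed.

Lemma gne_psi_le0 i j : \sum_(l < m) x i l < 1 -> inJ omega x i j ->
  psi F a i j (x i j) (xTo x i j) <= 0.
Proof.
move=> row_lt1 jJ; have [x_gt0 load_le] := gne_inJ_bounds jJ.
move: load_le; rewrite le_eqVlt => /predU1P[load_eq | load_lt].
  exact: ltW (psi_lt0_at_omega x_gt0 (gne_xTo_ge0 i j) load_eq).
rewrite -(pmulr_rle0 _ (powR_gt0 (a i - 1) x_gt0)).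
pose e := Num.min (omega i j - xTo x i j - x i j) (1 - \sum_(l < m) x i l).
have e_gt0 : 0 < e by rewrite lt_min; apply/andP; split; lra.
apply: (is_derive_right_max_le0 (is_derive_deviation jJ) e_gt0).
move=> h /andP[h_gt0]; rewrite lt_min => /andP[h_lt1 h_lt2].
apply: gne_deviation; first by case/andP: jJ.
  by apply/andP; split; lra.
lra.
Qed.

Lemma gne_typeI_of_row_sum_lt1 i :
  \sum_(j < m) x i j < 1 -> typeI F a omega x i.
Proof.
move=> row_lt1; split=> [|j jJ].
  apply: le_lt_trans row_lt1; rewrite [leRHS](bigID (inJ omega x i)) /= lerDl.
  by apply: sumr_ge0 => j _; apply: gne_ge0.
by apply/eqP; rewrite eq_le gne_psi_le0 ?gne_psi_ge0.
Qed.

End Equilibrium.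

Theorem lemma7 (R : realType) (n m : nat)
  (Rr p : 'I_m -> R -> R) (a k : 'I_n -> R) (omega : 'I_n -> 'I_m -> R)
  (hn : (0 < n)%N) (hm : (0 < m)%N) (hmn : (m <= n)%N)
  (hR : forall j (t : R), 0 <= t -> 1 < Rr j t)
  (hp : forall j (t : R), 0 <= t -> 0 <= p j t <= 1)
  (hp0 : forall j, p j 0 = 0)
  (hp1 : forall j (t : R), 1 <= t -> p j t = 1)
  (ha : forall i, 0 < a i <= 1)
  (hk : forall i, 0 < k i)
  (hcont : forall i j, {within `[0 : R, 1], continuous (Fpay Rr p a k i j)})
  (hd1 : forall i j (t : R), 0 < t < 1 ->
     derivable (Fpay Rr p a k i j) t 1 /\ derive1 (Fpay Rr p a k i j) t < 0)
  (hd2 : forall i j (t : R), 0 < t < 1 ->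
     derivable (derive1 (Fpay Rr p a k i j)) t 1 /\ derive1 (derive1 (Fpay Rr p a k i j)) t < 0)
  (homega : forall i j, 0 < omega i j < 1 /\ Fpay Rr p a k i j (omega i j) = 0 /\
     (forall t, 0 < t < 1 -> Fpay Rr p a k i j t = 0 -> t = omega i j))
  (x : 'I_n -> 'I_m -> R) :
  isGNE (Fpay Rr p a k) a omega x ->
  exists i : 'I_n, typeI (Fpay Rr p a k) a omega x i.
Proof.
move=> gne.
have omega_lt1 i j : omega i j < 1 by case: (homega i j) => /andP[].
have F_omega i j : Fpay Rr p a k i j (omega i j) = 0 by case: (homega i j) => _ [].
have [i row_lt1] := exists_row_sum_lt1 hm hmn (gne_col_sum_lt1 gne omega_lt1).
by exists i; apply: (gne_typeI_of_row_sum_lt1 gne omega_lt1 hd1 F_omega).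
Qed.
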